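(* Let $\{(\mathcal{X},\mathbf{h}_i)\}_{i=1}^\infty$ be a sequence of representable polymatroids on a common ground set $\mathcal{X}$ and $\{c_i\}_{i=1}^\infty$ positive reals such that $\lim_{i\to\infty}c_i\mathbf{h}_i=\mathbf{h}_0$. Let $0\le\epsilon\le\mathbf{h}_0(\mathcal{X})$, and define for all $\mathcal{A}\subseteq\mathcal{X}$ $\mathbf{g}_i(\mathcal{A})=\min\big(c_i\mathbf{h}_i(\mathcal{A}),\ c_i\mathbf{h}_i(\mathcal{X})-\epsilon\big)$ and $\mathbf{g}_0(\mathcal{A})=\min\big(\mathbf{h}_0(\mathcal{A}),\ \mathbf{h}_0(\mathcal{X})-\epsilon\big)$. Then $\lim_{i\to\infty}\mathbf{g}_i=\mathbf{g}_0$ and $\mathbf{g}_0$ is almost representable.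
   Context: A polymatroid $(\mathcal{X},\mathbf{h})$ is a finite ground set $\mathcal{X}=\{X_1,\dots,X_n\}$ with $\mathbf{h}:2^{\mathcal{X}}\to\mathbb{R}_{\ge0}$ satisfying $\mathbf{h}(\emptyset)=0$, monotonicity and submodularity. It is representable if for some finite field $\mathbb{F}_q$ there are subspaces $V_1,\dots,V_n$ of an $\mathbb{F}_q$-vector space with $\mathbf{h}(\{X_i:i\in\alpha\})=\dim\langle V_i:i\in\alpha\rangle$ for all $\alpha\subseteq\{1,\dots,n\}$. Rank functions are viewed as vectors in $\mathbb{R}^{2^{|\mathcal{X}|}}$ (limits are coordinatewise). A function $\mathbf{h}$ is almost representable if $\mathbf{h}=\lim_{i\to\infty}d_i\mathbf{f}_i$ for some representable rank functions $\mathbf{f}_i$ on $\mathcal{X}$ and positive reals $d_i$. *)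

From HB Require Import structures.
From mathcomp Require Import all_boot all_order all_algebra all_field.
From mathcomp Require Import all_classical all_reals all_analysis.
Set Implicit Arguments. Unset Strict Implicit. Unset Printing Implicit Defensive.
Import Order.TTheory GRing.Theory Num.Theory.
Import numFieldNormedType.Exports.
Local Open Scope classical_set_scope.
Local Open Scope ring_scope.

(* Ground set X = 'I_n; rank functions are maps {set 'I_n} -> R
   (vectors in R^{2^n}, indexed by subsets). *)

(* Representable: there are a finite field F, a finite-dimensional F-vector
   space F^m and subspaces V_1..V_n (each given as the row space of an
   m x m matrix) such that h(A) = dim < V_i : i in A >. *)
Definition representable (R : realType) (n : nat) (h : {set 'I_n} -> R) : Prop :=
  exists (F : finFieldType) (m : nat) (V : 'I_n -> 'M[F]_m),
    forall A : {set 'I_n}, h A = (\rank (\sum_(i in A) V i)%MS)%:R.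

Definition almost_representable (R : realType) (n : nat) (h : {set 'I_n} -> R)
  : Prop :=
  exists (f : nat -> {set 'I_n} -> R) (d : nat -> R),
    (forall i, representable (f i)) /\ (forall i, 0 < d i) /\
    (forall A : {set 'I_n}, (fun i => d i * f i A) @ \oo --> h A).

From HB Require Import structures.
From mathcomp Require Import all_boot all_order all_algebra all_field.
From mathcomp Require Import all_classical all_reals all_analysis.
From mathcomp Require Import mxabelem zify lra.
Import Order.TTheory GRing.Theory Num.Theory.
Import numFieldNormedType.Exports.
Set Implicit Arguments. Unset Strict Implicit. Unset Printing Implicit Defensive.
Local Open Scope ring_scope.

(* Write h_i as the rank function rho_i of subspaces over a finite field.  For
   an integer k_i > (i+1) c_i the mesh d_i = c_i / k_i tends to 0, and
   f_i := min(k_i rho_i, k_i rho_i(X) - t_i) with t_i ~ eps / d_i satisfies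
   |d_i f_i - max(g_i, 0)| <= d_i, whence d_i f_i --> max(g_0, 0) = g_0.
   Each f_i is representable: k_i rho_i is a direct sum of k_i copies, and
   lowering rho(X) by one is done by quotienting by a vector w of the whole
   space avoiding every sum subspace of smaller rank, which exists over a
   field with more than 2^n elements, i.e. after a field extension. *)

Definition representable_over (F : fieldType) (n : nat) (rho : {set 'I_n} -> nat) :=
  exists m (V : 'I_n -> 'M[F]_m), forall A, rho A = \rank (\sum_(i in A) V i)%MS.

Section RankFunctions.
Variables (F : fieldType) (n : nat).
Implicit Types rho : {set 'I_n} -> nat.

Lemma sumsmx_sub_setT m (V : 'I_n -> 'M[F]_m) (A : {set 'I_n}) :
  (\sum_(i in A) V i <= \sum_(i in [set: 'I_n]) V i)%MS.
Proof. by apply/sumsmx_subP => i _; apply: (sumsmx_sup i); rewrite ?in_setT. Qed.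

Lemma representable_over_leT rho A :
  representable_over F rho -> (rho A <= rho [set: 'I_n])%N.
Proof. by case=> m [V rkV]; rewrite !rkV; exact: mxrankS (sumsmx_sub_setT V A). Qed.

Lemma eq_representable_over rho1 rho2 :
  rho1 =1 rho2 -> representable_over F rho1 -> representable_over F rho2.
Proof. by move=> eq_rho [m [V rkV]]; exists m, V => A; rewrite -eq_rho. Qed.

Lemma diag_block_mx_eqmx p q m1 m2 (X : 'M[F]_(p, m1)) (Y : 'M[F]_(q, m2)) :
  (block_mx X 0 0 Y :=: X *m row_mx 1%:M 0 + Y *m row_mx 0 1%:M)%MS.
Proof.
rewrite block_mxEv !mul_mx_row !mulmx1 !mulmx0.
by apply: eqmx_sym; exact: addsmxE.
Qed.

Lemma representable_overD rho1 rho2 :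
  representable_over F rho1 -> representable_over F rho2 ->
  representable_over F (fun A => rho1 A + rho2 A)%N.
Proof.
move=> [m1 [V1 rkV1]] [m2 [V2 rkV2]].
exists (m1 + m2)%N, (fun i => block_mx (V1 i) 0 0 (V2 i)) => A.
rewrite rkV1 rkV2 -rank_diag_block_mx (diag_block_mx_eqmx (\sum_(i in A) V1 i)%MS).
rewrite (adds_eqmx (sumsmxMr_gen _ _ _) (sumsmxMr_gen _ _ _)) -big_split /=.
apply/eqmx_rank/eqmxP; apply: eqmx_sums => i _.
apply: eqmx_sym; apply: eqmx_trans (diag_block_mx_eqmx _ _) _.
by apply: adds_eqmx; apply: eqmx_sym; exact: genmxE.
Qed.

Lemma representable_overMn rho k :
  representable_over F rho -> representable_over F (fun A => k * rho A)%N.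
Proof.
move=> rhoF; elim: k => [|k IHk].
  by exists 0%N, (fun=> 0) => A; rewrite mul0n big1 ?mxrank0.
by apply: eq_representable_over (representable_overD rhoF IHk) => A; rewrite mulSn.
Qed.

Lemma representable_over_map (L : fieldType) (f : {rmorphism F -> L}) rho :
  representable_over F rho -> representable_over L rho.
Proof.
move=> [m [V rkV]]; exists m, (fun i => map_mx f (V i)) => A.
rewrite rkV -(mxrank_map f); apply/eqmx_rank.
apply: (big_rec2 (fun x y => (map_mx f x == y)%MS)); first by rewrite map_mx0; apply/eqmxP.
move=> i x y _ /eqmxP xy; apply/eqmxP.
by apply: eqmx_trans (map_addsmx _ _ _) _; exact: adds_eqmx.
Qed.

End RankFunctions.

Lemma kermx_cokermx (F : fieldType) k m (A : 'M[F]_(k, m)) : (kermx (cokermx A) :=: A)%MS.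
Proof. by apply/eqmxP/rV_eqP => u; rewrite sub_kermx submxE. Qed.

Lemma mxrank_cap_row (F : fieldType) k m (A : 'M[F]_(k, m)) (w : 'rV[F]_m) :
  w != 0 -> \rank (A :&: w)%MS = (w <= A)%MS.
Proof.
move=> w_neq0; have [le1 eq1] := mxrank_leqif_sup (capmxSr A w).
move: le1 eq1; rewrite sub_capmx submx_refl andbT rank_rV w_neq0.
by case: (w <= A)%MS => /= le1 /eqP; lia.
Qed.

Lemma mxrank_mul_cokermx_row (F : fieldType) k m (A : 'M[F]_(k, m)) (w : 'rV[F]_m) :
  w != 0 -> \rank (A *m cokermx w) = (\rank A - (w <= A)%MS)%N.
Proof.
move=> w_neq0; have := mxrank_mul_ker A (cokermx w).
by rewrite (cap_eqmx (eqmx_refl A) (kermx_cokermx w)) mxrank_cap_row //; lia.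
Qed.

Lemma leq_card_bigcup (T I : finType) (P : pred I) (G : I -> {set T}) :
  (#|\bigcup_(i | P i) G i| <= \sum_(i | P i) #|G i|)%N.
Proof.
apply: (big_ind2 (fun (A : {set T}) k => #|A| <= k)%N) => [|A k B l le_A le_B|//].
  by rewrite cards0.
by apply: leq_trans (leq_card_setU A B) _; exact: leq_add.
Qed.

Lemma exists_row_avoiding_subspaces (F : finFieldType) k m (U : 'M[F]_(k, m))
    (I : finType) p (S : I -> 'M[F]_(p, m)) :
  (#|I| < #|F|)%N ->
  exists2 w : 'rV[F]_m, (w <= U)%MS & forall i, (\rank (S i) < \rank U)%N -> ~~ (w <= S i)%MS.
Proof.
move=> ltIF; pose q := #|F|; have q_gt0 : (0 < q)%N := leq_ltn_trans (leq0n _) ltIF.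
set B := \bigcup_(i | (\rank (S i) < \rank U)%N) rowg (S i).
have ltBU : (#|B| < #|rowg U|)%N.
  rewrite card_rowg -(ltn_pmul2r q_gt0) -expnSr.
  apply: (@leq_ltn_trans (\sum_(i : I) q ^ \rank U)).
    rewrite [X in (_ <= X)%N](bigID (fun i => \rank (S i) < \rank U)%N) /=.
    apply: leq_trans (leq_addr _ _).
    apply: leq_trans (leq_mul (leq_card_bigcup _ _) (leqnn q)) _.
    rewrite big_distrl leq_sum // => i lt_SU; rewrite card_rowg.
    by rewrite /= -expnSr leq_pexp2l.
  by rewrite big_const iter_addn_0 mulnC expnS ltn_pmul2r ?expn_gt0 ?q_gt0.
have /subsetPn[w wU wNB] : ~~ (rowg U \subset B).
  by apply: contraL ltBU => /subset_leq_card; rewrite leqNgt.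
exists w => [|i lt_SU]; first by rewrite -mem_rowg.
by apply: contra wNB => wS; apply/bigcupP; exists i; rewrite ?mem_rowg.
Qed.

Section Truncation.
Variables (F : finFieldType) (n : nat).
Hypothesis card_F : (#|{set 'I_n}| < #|F|)%N.

Lemma representable_over_truncate1 (rho : {set 'I_n} -> nat) :
  (0 < rho [set: 'I_n])%N -> representable_over F rho ->
  representable_over F (fun A => minn (rho A) (rho [set: 'I_n]).-1).
Proof.
move=> rhoT_gt0 [m [V rkV]].
pose S (A : {set 'I_n}) := (\sum_(i in A) V i)%MS; pose U := S [set: 'I_n].
have [w wU wNS] := exists_row_avoiding_subspaces U S card_F.
have S0_lt : (\rank (S finset.set0) < \rank U)%N by rewrite /S big_set0 mxrank0 -rkV.
have w_neq0 : w != 0 by apply: contraNneq (wNS _ S0_lt) => ->; rewrite sub0mx.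
exists m, (fun i => V i *m cokermx w) => A.
rewrite -sumsmxMr mxrank_mul_cokermx_row // !rkV -/(S A) -/(S [set: 'I_n]) -/U.
have le_SU : (\rank (S A) <= \rank U)%N by exact: mxrankS (sumsmx_sub_setT V A).
have [lt_SU | ge_SU] := ltnP (\rank (S A)) (\rank U).
  by rewrite (negbTE (wNS A lt_SU)); lia.
have U_S : (U <= S A)%MS.
  by have [_ <-] := mxrank_leqif_sup (sumsmx_sub_setT V A); rewrite eqn_leq le_SU ge_SU.
by rewrite (submx_trans wU U_S); lia.
Qed.

Lemma representable_over_truncate (rho : {set 'I_n} -> nat) t :
  (t <= rho [set: 'I_n])%N -> representable_over F rho ->
  representable_over F (fun A => minn (rho A) (rho [set: 'I_n] - t)).
Proof.
move=> le_t rhoF; elim: t le_t => [_|t IHt lt_t].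
  apply: (eq_representable_over _ rhoF) => A.
  by rewrite subn0; have /minn_idPl -> := representable_over_leT A rhoF.
have := representable_over_truncate1 _ (IHt (ltnW lt_t)).
by move=> /(_ ltac:(lia)); apply: eq_representable_over => A; lia.
Qed.

End Truncation.

Lemma finField_ext_card_gt (F : finFieldType) N :
  exists (L : finFieldType) (f : {rmorphism F -> L}), (N < #|L|)%N.
Proof.
have [p pr_p pcharF] := finPcharP F.
pose m := (p ^ N.+1)%N.
pose q (R : nzRingType) : {poly R} := 'X^m - 'X.
have m_gt1 : (1 < m)%N by rewrite (ltn_exp2l 0) ?prime_gt1.
have size_q (K : fieldType) : size (q K) = m.+1.
  by rewrite size_polyDl size_polyXn // size_polyN size_polyX.
have /FinSplittingFieldFor[/= L splitLq]: q F != 0 by rewrite -size_poly_eq0 size_q.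
rewrite [map_poly _ _]rmorphB rmorphXn /= map_polyX -/(q L) in splitLq.
have [zs DqL _] := splitLq.
have pcharL : p \in [pchar L] by rewrite pchar_lalg.
have sep_q : separable_poly (q L).
  rewrite unlock /separable_poly derivB derivXn derivX -scaler_nat natrX pcharf0 //.
  by rewrite expr0n /= scale0r sub0r -scaleN1r coprimepZr ?oppr_eq0 ?oner_eq0 ?coprimep1.
have uniq_zs : uniq zs by rewrite -separable_prod_XsubC -(eqp_separable DqL).
have size_zs : size zs = m.
  by apply: succn_inj; rewrite -(size_prod_XsubC _ id) -(eqp_size DqL) size_q.
exists (FinFieldExtType L), (in_alg L).
apply: leq_trans (ltnW (ltn_expl N.+1 (prime_gt1 pr_p))) _.
by rewrite -/m -size_zs -(card_uniqP (uniq_zs : @uniq (FinFieldExtType L) zs)) max_card.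
Qed.

Lemma representable_truncn (R : realType) n (h : {set 'I_n} -> R) :
  representable h ->
  (forall A, h A = (Num.truncn (h A))%:R) /\
  exists F : finFieldType, representable_over F (fun A => Num.truncn (h A)).
Proof.
move=> [F [m [V rkV]]]; split=> [A|]; first by rewrite rkV natrK.
by exists F, m, V => A; rewrite rkV natrK.
Qed.

Lemma representable_scaled_truncation (R : realType) n (F : finFieldType)
    (rho : {set 'I_n} -> nat) k t :
  (t <= k * rho [set: 'I_n])%N -> representable_over F rho ->
  representable (fun A => (minn (k * rho A) (k * rho [set: 'I_n] - t))%:R : R).
Proof.
move=> le_t rhoF; have [L [f card_L]] := finField_ext_card_gt F #|{set 'I_n}|.
have [m [V rkV]] := representable_over_truncate card_L le_t
  (representable_over_map f (representable_overMn k rhoF)).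
by exists L, m, V => A; rewrite rkV.
Qed.

Local Open Scope classical_set_scope.

Section Limits.
Variable R : realType.

Lemma cvg_minr (u v : nat -> R) a b : u @ \oo --> a -> v @ \oo --> b ->
  (fun i => Num.min (u i) (v i)) @ \oo --> Num.min a b.
Proof. by move=> ua vb; apply: continuous2_cvg ua vb; exact: (@min_continuous _ R (a, b)). Qed.

Lemma cvg_maxr (u v : nat -> R) a b : u @ \oo --> a -> v @ \oo --> b ->
  (fun i => Num.max (u i) (v i)) @ \oo --> Num.max a b.
Proof. by move=> ua vb; apply: continuous2_cvg ua vb; exact: (@max_continuous _ R (a, b)). Qed.

Lemma cvg_maxr0 (u : nat -> R) (a : R) : u @ \oo --> a -> 0 <= a ->
  (fun i => Num.max (u i) 0) @ \oo --> a.
Proof.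
move=> ua a_ge0; have := cvg_maxr ua (cvg_cst 0).
by rewrite max_l //; apply; exact: eventually_filter.
Qed.

Lemma cvg_dist_le (u w v : nat -> R) (l : R) : (forall i, `|u i - w i| <= v i) ->
  v @ \oo --> 0 -> w @ \oo --> l -> u @ \oo --> l.
Proof.
move=> uwv v0 wl; apply: (@squeeze_cvgr _ _ _ _ (w - v) (w + v)).
- by apply: nearW => i; have := uwv i; rewrite ler_distl.
- by rewrite -(subr0 l); apply: cvgB.
- by rewrite -(addr0 l); apply: cvgD.
Qed.

Lemma dist_min_shift_le (a b e s D : R) :
  0 <= a -> s <= b -> s <= e -> 0 <= D -> (s = b \/ e < s + D) ->
  `|Num.min a (b - s) - Num.max (Num.min a (b - e)) 0| <= D.
Proof.
move=> a_ge0 le_sb le_se D_ge0 s_tight.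
rewrite !minEle maxEle; case: (leP a (b - s)) => ?; case: (leP a (b - e)) => ? /=;
  case: (leP _ 0) => ?; rewrite ler_norml; apply/andP; split; case: s_tight => ?; lra.
Qed.

End Limits.

Lemma natr_minn (R : numDomainType) m k : (minn m k)%:R = Num.min (m%:R : R) k%:R.
Proof. by rewrite minEle ler_nat; case: leqP. Qed.

Section Approximation.
Variables (R : realType) (n : nat) (rho : nat -> {set 'I_n} -> nat) (c : nat -> R)
  (h0 : {set 'I_n} -> R) (eps : R).
Hypothesis c_gt0 : forall i, 0 < c i.
Hypothesis cvg_rho : forall A, (fun i => c i * (rho i A)%:R) @ \oo --> h0 A.
Hypothesis eps_ge0 : 0 <= eps.
Hypothesis eps_leT : eps <= h0 [set: 'I_n]%SET.

Definition scale i := (Num.truncn (i.+1%:R * c i)).+1.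
Definition mesh i := c i / (scale i)%:R.
Definition shift i := minn (Num.truncn (eps / mesh i)) (scale i * rho i [set: 'I_n]%SET).
Definition approx i A := minn (scale i * rho i A) (scale i * rho i [set: 'I_n]%SET - shift i).

Lemma mesh_gt0 i : 0 < mesh i.
Proof. by rewrite divr_gt0 ?ltr0n. Qed.

Lemma mesh_scale i : mesh i * (scale i)%:R = c i.
Proof. by rewrite divfK ?pnatr_eq0. Qed.

Lemma cvg_mesh : mesh @ \oo --> 0.
Proof.
apply: (@cvg_dist_le _ _ (cst 0) harmonic) => [i||]; last exact: cvg_cst.
  rewrite subr0 ger0_norm; last exact: ltW (mesh_gt0 i).
  apply: ltW; rewrite /mesh /harmonic /= ltr_pdivrMr ?ltr0n // -(ltr_pM2l (ltr0Sn R i)) mulrA mulfV ?pnatr_eq0 //.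
  by rewrite mul1r -truncn_le_nat.
exact: (@cvg_harmonic R).
Qed.

Lemma mesh_shift_le i : mesh i * (shift i)%:R <= eps.
Proof.
have le_shift : ((shift i)%:R : R) <= eps / mesh i.
  apply: (@le_trans _ _ (Num.truncn (eps / mesh i))%:R); first by rewrite ler_nat geq_minl.
  by rewrite truncn_le divr_ge0 // ltW // mesh_gt0.
by rewrite mulrC -ler_pdivlMr ?mesh_gt0.
Qed.

Lemma mesh_shift_tight i :
  mesh i * (shift i)%:R = c i * (rho i [set: 'I_n]%SET)%:R \/
  eps < mesh i * (shift i)%:R + mesh i.
Proof.
rewrite /shift.
have [_ | _] := leqP (Num.truncn (eps / mesh i)) (scale i * rho i [set: 'I_n]%SET).
  right; rewrite -[X in _ + X]mulr1 -mulrDr natr1 mulrC.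
  by rewrite -ltr_pdivrMr ?mesh_gt0 // truncnS_gt.
by left; rewrite natrM mulrA mesh_scale.
Qed.

Lemma mesh_approxE i A : mesh i * (approx i A)%:R =
  Num.min (c i * (rho i A)%:R) (c i * (rho i [set: 'I_n]%SET)%:R - mesh i * (shift i)%:R).
Proof.
have le_shift : (shift i <= scale i * rho i [set: 'I_n]%SET)%N by exact: geq_minr.
rewrite /approx natr_minn minr_pMr ?ltW ?mesh_gt0 // natrB // mulrBr !natrM !mulrA.
by rewrite mesh_scale.
Qed.

Lemma cvg_approx A : (fun i => mesh i * (approx i A)%:R) @ \oo -->
  Num.min (h0 A) (h0 [set: 'I_n]%SET - eps).
Proof.
have h0_ge0 B : 0 <= h0 B.
  apply: (ler_cvg_to (cvg_cst 0) (@cvg_rho B)); apply: nearW => i.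
  by rewrite mulr_ge0 // ltW.
have g0_ge0 : 0 <= Num.min (h0 A) (h0 [set: 'I_n]%SET - eps).
  by rewrite le_min h0_ge0 subr_ge0.
apply: (cvg_dist_le _ cvg_mesh
  (cvg_maxr0 (cvg_minr (@cvg_rho A) (cvgB (@cvg_rho _) (cvg_cst eps))) g0_ge0)) => i.
rewrite mesh_approxE; apply: dist_min_shift_le.
- by rewrite mulr_ge0 // ltW.
- by rewrite -mesh_scale -mulrA ler_pM2l ?mesh_gt0 // -natrM ler_nat geq_minr.
- exact: mesh_shift_le.
- exact: ltW (mesh_gt0 i).
- exact: mesh_shift_tight.
Qed.
End Approximation.

Theorem proposition2 (R : realType) (n : nat)
  (h : nat -> {set 'I_n} -> R) (c : nat -> R) (h0 : {set 'I_n} -> R) (eps : R) :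
  (forall i, representable (h i)) ->
  (forall i, 0 < c i) ->
  (forall A : {set 'I_n}, (fun i => c i * h i A) @ \oo --> h0 A) ->
  0 <= eps -> eps <= h0 [set: 'I_n]%SET ->
  let g := fun i (A : {set 'I_n}) => Num.min (c i * h i A) (c i * h i [set: 'I_n]%SET - eps) in
  let g0 := fun A : {set 'I_n} => Num.min (h0 A) (h0 [set: 'I_n]%SET - eps) in
  (forall A : {set 'I_n}, (fun i => g i A) @ \oo --> g0 A) /\
  almost_representable g0.
Proof.
move=> h_rep c_gt0 cvg_h eps_ge0 eps_leT g g0.
pose rho i A := Num.truncn (h i A).
have h_nat i A : h i A = (rho i A)%:R := proj1 (representable_truncn (h_rep i)) A.
have cvg_rho A : (fun i => c i * (rho i A)%:R) @ \oo --> h0 A.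
  by under eq_fun => i do rewrite -h_nat; exact: cvg_h.
split=> [A|].
  by apply: cvg_minr (cvg_h A) _; apply: cvgB (cvg_h _) (cvg_cst eps).
exists (fun i A => (approx rho c eps i A)%:R), (mesh c); split; [|split].
- move=> i; have [_ [F rhoF]] := representable_truncn (h_rep i).
  exact: representable_scaled_truncation (geq_minr _ _) rhoF.
- exact: mesh_gt0.
- exact: cvg_approx c_gt0 cvg_rho eps_ge0 eps_leT.
Qed.
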